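(* Consider class-incremental learning with pre-training in the setting described in the context. Suppose $\mathbb{E}_{\boldsymbol{x}}[H_{\rm WTP}(\boldsymbol{x})]\le\delta$, $\mathbb{E}_{\boldsymbol{x}}[H_{\rm TII}(\boldsymbol{x})]\le\epsilon$ and $\mathbb{E}_{\boldsymbol{x}}[H_{\rm TAP}(\boldsymbol{x})]\le\eta$. Then the loss error satisfies $\mathcal{L}\in[0,\max\{\delta+\epsilon,\eta\}]$. This holds regardless of whether the within-task prediction, task-identity inference and task-adaptive prediction distributions are trained together or separately.
   Context: Class-incremental setting: tasks $1,\dots,t$ with training sets $\mathcal{D}=\{\mathcal{D}_1,\dots,\mathcal{D}_t\}$, input domains $\mathcal{X}_k=\bigcup_j \mathcal{X}_{k,j}$ and pairwise disjoint label sets $\mathcal{Y}_k=\{\mathcal{Y}_{k,j}\}_{j=1}^{|\mathcal{Y}_k|}$ ($\mathcal{Y}_k\cap\mathcal{Y}_{k'}=\emptyset$ for $k\ne k'$), where $\mathcal{X}_{k,j}$ is the domain of the $j$-th class of task $k$; $\theta$ are the parameters of a pre-trained backbone. For a class $c\in\bigcup_{k\le t}\mathcal{Y}_k$, $\mathcal{X}^c$ denotes the domain of class $c$. For a sample $\boldsymbol{x}\in\bigcup_{k\le t}\mathcal{X}_k$, let $\bar i$ be its true task index, $\bar j$ its true within-task class index, and $y=\mathcal{Y}_{\bar i,\bar j}$ its true label. The model specifies: a task-identity inference (TII) distribution $\{P(\boldsymbol{x}\in\mathcal{X}_i\mid\mathcal{D},\theta)\}_{i=1}^t$; for each task $i$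 a within-task prediction (WTP) distribution $\{P(\boldsymbol{x}\in\mathcal{X}_{i,j}\mid\boldsymbol{x}\in\mathcal{X}_i,\mathcal{D},\theta)\}_j$; the induced joint prediction $P(\boldsymbol{x}\in\mathcal{X}_{i,j}\mid\mathcal{D},\theta)=P(\boldsymbol{x}\in\mathcal{X}_{i,j}\mid\boldsymbol{x}\in\mathcal{X}_i,\mathcal{D},\theta)\,P(\boldsymbol{x}\in\mathcal{X}_i\mid\mathcal{D},\theta)$; and a task-adaptive prediction (TAP) distribution $\{P(\boldsymbol{x}\in\mathcal{X}^c\mid\mathcal{D},\theta)\}_c$ over all observed classes. With $\mathcal{H}(p,q)=-\sum_i p_i\log q_i$ and $\boldsymbol{1}_\cdot$ one-hot encoding, define $H_{\rm WTP}(\boldsymbol{x})=\mathcal{H}(\boldsymbol{1}_{\bar j},\{P(\boldsymbol{x}\in\mathcal{X}_{\bar i,j}\mid\boldsymbol{x}\in\mathcal{X}_{\bar i},\mathcal{D},\theta)\}_j)$, $H_{\rm TII}(\boldsymbol{x})=\mathcal{H}(\boldsymbol{1}_{\bar i},\{P(\boldsymbol{x}\in\mathcal{X}_i\mid\mathcal{D},\theta)\}_i)$, $H_{\rm TAP}(\boldsymbol{x})=\mathcal{H}(\boldsymbol{1}_{y},\{P(\boldsymbol{x}\in\mathcal{X}^c\mid\mathcal{D},\theta)\}_c)$. The goal is the multi-objective problem $\max[P(\boldsymbol{x}\in\mathcal{X}_{\bar i,\bar j}\mid\mathcal{D},\theta),P(\boldsymbol{x}\in\mathcal{X}^y\mid\mathcal{D},\theta)]$,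 and the loss error is $\mathcal{L}=\max\{\mathbb{E}_{\boldsymbol{x}}[\mathcal{H}(\boldsymbol{1}_{\bar i,\bar j},\{P(\boldsymbol{x}\in\mathcal{X}_{i,j}\mid\mathcal{D},\theta)\}_{i,j})],\ \mathbb{E}_{\boldsymbol{x}}[H_{\rm TAP}(\boldsymbol{x})]\}$. *)

From HB Require Import structures.
From mathcomp Require Import all_boot all_order all_algebra.
From mathcomp Require Import all_classical all_reals all_analysis.
From mathcomp Require Import measurable_realfun.
Set Implicit Arguments. Unset Strict Implicit. Unset Printing Implicit Defensive.
Import Order.TTheory GRing.Theory Num.Theory.
Import numFieldNormedType.Exports.
Local Open Scope ring_scope.

Definition is_distr (R : realType) (I : finType) (q : I -> R) : Prop :=
  (forall i, 0 <= q i) /\ \sum_(i : I) q i = 1.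

Definition onehot (R : realType) (I : finType) (k : I) : I -> R :=
  fun i => if i == k then 1 else 0.

(* Cross-entropy H(p,q) = - \sum_i p_i log q_i, valued in the extended reals,
   with the standard conventions 0 * log(anything) = 0 and
   - p log 0 = +oo for p > 0. *)
Definition xent (R : realType) (I : finType) (p q : I -> R) : \bar R :=
  \sum_(i : I)
     (if p i == 0%R then 0%E
      else if (0 < q i)%R then (- (p i * ln (q i)))%:E else +oo%E).

(* Labels of the class-incremental setting: task i has n i classes; the class
   j of task i is the pair (i, j), so label sets of different tasks are
   disjoint by construction. *)
Definition label (t : nat) (n : 'I_t -> nat) := {i : 'I_t & 'I_(n i)}.

(* The induced joint prediction P(x in X_{i,j}) = P(x in X_{i,j} | x in X_i) P(x in X_i). *)
Definition joint (R : realType) (t : nat) (n : 'I_t -> nat)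
  (tii : 'I_t -> R) (wtp : forall i : 'I_t, 'I_(n i) -> R) : label n -> R :=
  fun c => wtp (tag c) (tagged c) * tii (tag c).

Definition H_WTP (R : realType) (T : Type) (t : nat) (n : 'I_t -> nat)
  (lab : T -> label n) (wtp : T -> forall i : 'I_t, 'I_(n i) -> R) (x : T) : \bar R :=
  xent (onehot R (tagged (lab x))) (wtp x (tag (lab x))).

Definition H_TII (R : realType) (T : Type) (t : nat) (n : 'I_t -> nat)
  (lab : T -> label n) (tii : T -> 'I_t -> R) (x : T) : \bar R :=
  xent (onehot R (tag (lab x))) (tii x).

Definition H_TAP (R : realType) (T : Type) (t : nat) (n : 'I_t -> nat)
  (lab : T -> label n) (tap : T -> label n -> R) (x : T) : \bar R :=
  xent (onehot R (lab x)) (tap x).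

Definition H_joint (R : realType) (T : Type) (t : nat) (n : 'I_t -> nat)
  (lab : T -> label n) (tii : T -> 'I_t -> R)
  (wtp : T -> forall i : 'I_t, 'I_(n i) -> R) (x : T) : \bar R :=
  xent (onehot R (lab x)) (joint (tii x) (wtp x)).

Definition loss_error (R : realType) (d : measure_display) (T : measurableType d)
  (P : probability T R) (t : nat) (n : 'I_t -> nat)
  (lab : T -> label n) (tii : T -> 'I_t -> R)
  (wtp : T -> forall i : 'I_t, 'I_(n i) -> R) (tap : T -> label n -> R) : \bar R :=
  Order.max (\int[P]_x H_joint lab tii wtp x)%E (\int[P]_x H_TAP lab tap x)%E.

From HB Require Import structures.
From mathcomp Require Import all_boot all_order all_algebra.
From mathcomp Require Import all_classical all_reals all_analysis.
From mathcomp Require Import measurable_realfun.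
Import Order.TTheory GRing.Theory Num.Theory.
Import numFieldNormedType.Exports.
Local Open Scope ring_scope.

(* Against a one-hot target, cross entropy is the surprisal -ln q of the true
   class.  The joint prediction of the true label (i, j) is the product of the
   WTP probability of j and the TII probability of i, and surprisal turns
   products into sums, so H_joint = H_WTP + H_TII pointwise, +oo included.
   Integrating this nonnegative identity gives E[H_joint] <= delta + eps,
   while E[H_TAP] <= eta is assumed; nonnegativity of all terms comes from
   probabilities being at most 1. *)

Definition surprisal {R : realType} (a : R) : \bar R :=
  if 0 < a then (- ln a)%:E else +oo%E.

Lemma surprisal_ge0 {R : realType} (a : R) : a <= 1 -> (0 <= surprisal a)%E.
Proof.
rewrite /surprisal; case: ifP => // _ a_le1.
by rewrite lee_fin oppr_ge0 ln_le0.
Qed.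

Lemma surprisalM {R : realType} (a b : R) : 0 <= a -> 0 <= b ->
  surprisal (a * b) = (surprisal a + surprisal b)%E.
Proof.
rewrite /surprisal le0r => /predU1P[-> _|a_gt0].
  by rewrite mul0r ltxx addye //; case: ifP.
rewrite le0r => /predU1P[->|b_gt0]; first by rewrite mulr0 ltxx a_gt0 addey.
by rewrite mulr_gt0 // a_gt0 b_gt0 lnM ?posrE // opprD.
Qed.

Lemma xent_onehot (R : realType) (I : finType) (k : I) (q : I -> R) :
  xent (onehot R k) q = surprisal (q k).
Proof.
rewrite /xent (bigD1 k) //= big1 ?adde0.
  by rewrite /onehot eqxx oner_eq0 mul1r.
by move=> i /negbTE ik; rewrite /onehot ik eqxx.
Qed.

Lemma distr_le1 (R : realType) (I : finType) (q : I -> R) (k : I) :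
  is_distr q -> q k <= 1.
Proof.
by move=> [q_ge0 <-]; rewrite (bigD1 k) //= lerDl sumr_ge0.
Qed.

Lemma xent_onehot_ge0 (R : realType) (I : finType) (k : I) (q : I -> R) :
  is_distr q -> (0 <= xent (onehot R k) q)%E.
Proof. by move=> q_distr; rewrite xent_onehot surprisal_ge0 ?distr_le1. Qed.

Lemma H_jointE (R : realType) (T : Type) (t : nat) (n : 'I_t -> nat)
    (lab : T -> label n) (tii : T -> 'I_t -> R)
    (wtp : T -> forall i : 'I_t, 'I_(n i) -> R) (x : T) :
    is_distr (tii x) -> is_distr (wtp x (tag (lab x))) ->
  H_joint lab tii wtp x = (H_WTP lab wtp x + H_TII lab tii x)%E.
Proof.
move=> [tii_ge0 _] [wtp_ge0 _].
by rewrite /H_joint /H_WTP /H_TII !xent_onehot /joint surprisalM.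
Qed.

Theorem theorem1 (R : realType) (d : measure_display) (T : measurableType d)
  (P : probability T R) (t : nat) (n : 'I_t -> nat)
  (lab : T -> label n)
  (tii : T -> 'I_t -> R)
  (wtp : T -> forall i : 'I_t, 'I_(n i) -> R)
  (tap : T -> label n -> R)
  (delta eps eta : R)
  (Htii : forall x, is_distr (tii x))
  (Hwtp : forall x (i : 'I_t), is_distr (wtp x i))
  (Htap : forall x, is_distr (tap x))
  (mWTP : measurable_fun setT (H_WTP lab wtp))
  (mTII : measurable_fun setT (H_TII lab tii))
  (mTAP : measurable_fun setT (H_TAP lab tap))
  (hWTP : (\int[P]_x H_WTP lab wtp x <= delta%:E)%E)
  (hTII : (\int[P]_x H_TII lab tii x <= eps%:E)%E)
  (hTAP : (\int[P]_x H_TAP lab tap x <= eta%:E)%E) :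
  (0 <= loss_error P lab tii wtp tap
   /\ loss_error P lab tii wtp tap <= (Order.max (delta + eps) eta)%:E)%E.
Proof.
have WTP_ge0 x : (0 <= H_WTP lab wtp x)%E by exact: xent_onehot_ge0.
have TII_ge0 x : (0 <= H_TII lab tii x)%E by exact: xent_onehot_ge0.
have TAP_ge0 x : (0 <= H_TAP lab tap x)%E by exact: xent_onehot_ge0.
have joint_le : (\int[P]_x H_joint lab tii wtp x <= (delta + eps)%:E)%E.
  under eq_integral => x _ do rewrite H_jointE //.
  by rewrite ge0_integralD // EFinD leeD.
rewrite /loss_error le_max ge_max; split.
  by apply/orP; right; apply: integral_ge0.
apply/andP; split.
  by rewrite (le_trans joint_le) // lee_fin le_max lexx.
by rewrite (le_trans hTAP) // lee_fin le_max lexx orbT.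
Qed.
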